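(* Let $\mathcal{M}=\langle S,R_1,R_2,V\rangle$ and $\mathcal{M}'=\langle S',R_1',R_2',V'\rangle$ be bimodal models and let $f:S\to S'$ be a $\boxdot$-morphism from $\mathcal{M}$ to $\mathcal{M}'$. Then for all $x\in S$ and all $\phi\in\mathcal{L}(\boxdot)\cup\mathcal{L}(\boxplus)$, $\mathcal{M},x\vDash\phi\iff\mathcal{M}',f(x)\vDash\phi$.
   Context: Fix a nonempty set $\mathbf{P}$ of propositional variables. A bimodal model is $\langle S,R_1,R_2,V\rangle$ with $S$ nonempty, $R_1,R_2\subseteq S\times S$, $V:\mathbf{P}\to\mathcal{P}(S)$. Write $R_i(s)=\{t\mid sR_it\}$. $\mathcal{L}(\boxdot):\ \phi::=p\mid\neg\phi\mid(\phi\wedge\phi)\mid\boxdot\phi$ and $\mathcal{L}(\boxplus):\ \phi::=p\mid\neg\phi\mid(\phi\wedge\phi)\mid\boxplus\phi$. Truth: $\mathcal{M},s\vDash p$ iff $s\in V(p)$; Booleans as usual; $\mathcal{M},s\vDash\boxdot\phi$ iff for all $t,u$ with $sR_1t$ and $sR_2u$, ($\mathcal{M},t\vDash\phi\iff\mathcal{M},u\vDash\phi$); $\mathcal{M},s\vDash\boxplus\phi$ iff ($\mathcal{M},t\vDash\phi$ for all $t\in R_1(s)$) or ($\mathcal{M},u\vDash\neg\phi$ for all $u\in R_2(s)$). A function $f:S\to S'$ is a $\boxdot$-morphism from $\mathcal{M}$ to $\mathcal{M}'$ if for all $x\in S$: (Var) for all $p\in\mathbf{P}$, $x\in V(p)$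 iff $f(x)\in V'(p)$; (Forth) for all $y,z\in S$, if $xR_1y$, $xR_2z$ and $f(y)\neq f(z)$, then $f(x)R_1'f(y)$ and $f(x)R_2'f(z)$; (Back) for all $y',z'\in S'$, if $f(x)R_1'y'$, $f(x)R_2'z'$ and $y'\neq z'$, then there are $y,z\in S$ with $xR_1y$, $xR_2z$, $f(y)=y'$, $f(z)=z'$. *)

Record model (P : Type) := Model {
  state : Type;
  R1 : state -> state -> Prop;
  R2 : state -> state -> Prop;
  val : P -> state -> Prop
}.
Arguments Model {P} state R1 R2 val.
Arguments state {P} m.
Arguments R1 {P} m _ _.
Arguments R2 {P} m _ _.
Arguments val {P} m _ _.

Inductive formD (P : Type) : Type :=
| DVar : P -> formD P
| DNeg : formD P -> formD P
| DAnd : formD P -> formD P -> formD P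
| DBox : formD P -> formD P.
Arguments DVar {P} _.
Arguments DNeg {P} _.
Arguments DAnd {P} _ _.
Arguments DBox {P} _.

Inductive formP (P : Type) : Type :=
| PVar : P -> formP P
| PNeg : formP P -> formP P
| PAnd : formP P -> formP P -> formP P
| PBox : formP P -> formP P.
Arguments PVar {P} _.
Arguments PNeg {P} _.
Arguments PAnd {P} _ _.
Arguments PBox {P} _.

Fixpoint satD {P} (M : model P) (s : state M) (phi : formD P) : Prop :=
  match phi with
  | DVar p => val M p s
  | DNeg a => ~ satD M s a
  | DAnd a b => satD M s a /\ satD M s b
  | DBox a => forall t u, R1 M s t -> R2 M s u -> (satD M t a <-> satD M u a)
  end.

Fixpoint satP {P} (M : model P) (s : state M) (phi : formP P) : Prop :=
  match phi with
  | PVar p => val M p s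
  | PNeg a => ~ satP M s a
  | PAnd a b => satP M s a /\ satP M s b
  | PBox a => (forall t, R1 M s t -> satP M t a)
              \/ (forall u, R2 M s u -> ~ satP M u a)
  end.

Definition dot_morphism {P} (M M' : model P) (f : state M -> state M') : Prop :=
  forall x : state M,
    (forall p, val M p x <-> val M' p (f x)) /\
    (forall y z, R1 M x y -> R2 M x z -> f y <> f z ->
        R1 M' (f x) (f y) /\ R2 M' (f x) (f z)) /\
    (forall y' z', R1 M' (f x) y' -> R2 M' (f x) z' -> y' <> z' ->
        exists y z, R1 M x y /\ R2 M x z /\ f y = y' /\ f z = z').

From Stdlib Require Import Classical.

(* Both modalities only look at pairs (t, u) with s R1 t and s R2 u on which
   the argument formula takes prescribed truth values:
   - [] phi (boxdot) fails at s iff some such pair has phi true at t and false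
     at u, or false at t and true at u;
   - [+] phi (boxplus) fails at s iff some such pair has phi false at t and
     true at u.
   In every case the two prescribed values are contradictory, so the two
   members of a witnessing pair are distinct points.  The Forth and Back
   clauses of a boxdot-morphism say exactly that such "distinct" pairs are
   transported along f in both directions (lemma [witness_transfer]). *)

Definition witnessed {P} (M : model P) (s : state M)
    (A B : state M -> Prop) : Prop :=
  exists t u, R1 M s t /\ R2 M s u /\ A t /\ B u.

Lemma satD_box_iff {P} (M : model P) (s : state M) (a : formD P) :
  satD M s (DBox a) <->
  ~ witnessed M s (fun t => satD M t a) (fun u => ~ satD M u a) /\
  ~ witnessed M s (fun t => ~ satD M t a) (fun u => satD M u a).
Proof.
  simpl; split.
  - intros H; split; intros [t [u [Ht [Hu [At Bu]]]]];
      specialize (H t u Ht Hu); tauto.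
  - intros [N1 N2] t u Ht Hu.
    destruct (classic (satD M t a)), (classic (satD M u a)); try tauto.
    + exfalso; apply N1; exists t, u; tauto.
    + exfalso; apply N2; exists t, u; tauto.
Qed.

Lemma satP_box_iff {P} (M : model P) (s : state M) (a : formP P) :
  satP M s (PBox a) <->
  ~ witnessed M s (fun t => ~ satP M t a) (fun u => satP M u a).
Proof.
  simpl; split.
  - intros [H | H] [t [u [Ht [Hu [At Bu]]]]].
    + exact (At (H t Ht)).
    + exact (H u Hu Bu).
  - intros N. destruct (classic (forall t, R1 M s t -> satP M t a)) as [C | C].
    + left; exact C.
    + right; intros u Hu Su. apply C; intros t Ht.
      apply NNPP; intros Nt. apply N; exists t, u; tauto.
Qed.

Section DotMorphism.

Variables (P : Type) (M M' : model P) (f : state M -> state M').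
Hypothesis Hf : dot_morphism M M' f.

(* Witnesses for mutually exclusive conditions are transported by f in both
   directions: forwards by Forth, backwards by Back, since the two points of
   such a witness are necessarily distinct. *)
Lemma witness_transfer (x : state M) (A B : state M -> Prop)
    (A' B' : state M' -> Prop) :
  (forall y, A y <-> A' (f y)) -> (forall y, B y <-> B' (f y)) ->
  (forall y', A' y' -> B' y' -> False) ->
  witnessed M x A B <-> witnessed M' (f x) A' B'.
Proof.
  intros HA HB disjoint. destruct (Hf x) as [_ [forth back]]. split.
  - intros [y [z [Hy [Hz [Ay Bz]]]]].
    apply HA in Ay; apply HB in Bz.
    assert (distinct : f y <> f z)
      by (intros E; rewrite E in Ay; exact (disjoint _ Ay Bz)).
    destruct (forth y z Hy Hz distinct) as [Hy' Hz'].
    exists (f y), (f z); tauto.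
  - intros [y' [z' [Hy' [Hz' [Ay' Bz']]]]].
    assert (distinct : y' <> z')
      by (intros <-; exact (disjoint _ Ay' Bz')).
    destruct (back y' z' Hy' Hz' distinct) as [y [z [Hy [Hz [<- <-]]]]].
    exists y, z; rewrite HA, HB; tauto.
Qed.

Lemma dot_morphism_preserves_satD (phi : formD P) :
  forall x : state M, satD M x phi <-> satD M' (f x) phi.
Proof.
  induction phi as [p | a IH | a IHa b IHb | a IH]; intros x.
  - exact (proj1 (Hf x) p).
  - simpl; rewrite IH; tauto.
  - simpl; rewrite IHa, IHb; tauto.
  - rewrite !satD_box_iff.
    rewrite (witness_transfer x _ _ (fun t => satD M' t a)
               (fun u => ~ satD M' u a)) by (intros; rewrite ?IH; tauto).
    rewrite (witness_transfer x _ _ (fun t => ~ satD M' t a)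
               (fun u => satD M' u a)) by (intros; rewrite ?IH; tauto).
    tauto.
Qed.

Lemma dot_morphism_preserves_satP (phi : formP P) :
  forall x : state M, satP M x phi <-> satP M' (f x) phi.
Proof.
  induction phi as [p | a IH | a IHa b IHb | a IH]; intros x.
  - exact (proj1 (Hf x) p).
  - simpl; rewrite IH; tauto.
  - simpl; rewrite IHa, IHb; tauto.
  - rewrite !satP_box_iff.
    rewrite (witness_transfer x _ _ (fun t => ~ satP M' t a)
               (fun u => satP M' u a)) by (intros; rewrite ?IH; tauto).
    tauto.
Qed.

End DotMorphism.

Theorem proposition4p2 (P : Type) (p0 : P) (M M' : model P)
  (S_inh : inhabited (state M)) (f : state M -> state M')
  (Hf : dot_morphism M M' f) :
  (forall (x : state M) (phi : formD P), satD M x phi <-> satD M' (f x) phi) /\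
  (forall (x : state M) (phi : formP P), satP M x phi <-> satP M' (f x) phi).
Proof.
  split; intros x phi.
  - exact (dot_morphism_preserves_satD P M M' f Hf phi x).
  - exact (dot_morphism_preserves_satP P M M' f Hf phi x).
Qed.
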